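(* Let $\mathcal{P}_{XY}$ be a probability measure on a product measurable space $(\mathcal{X}\times\mathcal{Y},\mathcal{F})$ with marginals $\mathcal{P}_X,\mathcal{P}_Y$, and assume $\mathcal{P}_{XY}\ll\mathcal{P}_X\mathcal{P}_Y$. Then for every $E\in\mathcal{F}$, $$\mathcal{P}_{XY}(E)\le\left(\operatorname*{ess\,sup}_{\mathcal{P}_Y}\mathcal{P}_X(E_Y)\right)\exp\left(\mathcal{L}(X\to Y)\right).$$
   Context: For $E\in\mathcal{F}$ and $y\in\mathcal{Y}$, $E_y:=\{x:(x,y)\in E\}$; $\operatorname*{ess\,sup}_{\mathcal{P}_Y}\mathcal{P}_X(E_Y)$ is the $\mathcal{P}_Y$-essential supremum of $y\mapsto\mathcal{P}_X(E_y)$. The maximal leakage from $X$ to $Y$ (Sibson mutual information of order $\infty$) is, with $f=\frac{d\mathcal{P}_{XY}}{d\mathcal{P}_X\mathcal{P}_Y}$, $\mathcal{L}(X\to Y)=I_\infty(X;Y)=\log\mathbb{E}_{\mathcal{P}_Y}\left[\operatorname*{ess\,sup}_{\mathcal{P}_X}f(\cdot,Y)\right]$, where for fixed $y$ the essential supremum of $x\mapsto f(x,y)$ is taken with respect to $\mathcal{P}_X$ (for discrete alphabets this is $\log\mathbb{E}_{\mathcal{P}_Y}\left[\sup_{x:\mathcal{P}_X(x)>0}\frac{\mathcal{P}_{XY}(x,Y)}{\mathcal{P}_X(x)\mathcal{P}_Y(Y)}\right]$). Logarithms are natural. *)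

From HB Require Import structures.
From mathcomp Require Import all_boot all_order all_algebra.
From mathcomp Require Import all_classical all_reals all_analysis.
From mathcomp Require Import ess_sup_inf.
Set Implicit Arguments. Unset Strict Implicit. Unset Printing Implicit Defensive.
Import Order.TTheory GRing.Theory Num.Theory.
Import numFieldNormedType.Exports.
Local Open Scope classical_set_scope.
Local Open Scope ring_scope.
Local Open Scope ereal_scope.

Definition lne {R : realType} (x : \bar R) : \bar R :=
  match x with
  | r%:E => (ln r)%:E
  | +oo => +oo
  | -oo => -oo
  end.

Definition max_leakage d1 d2 (X : measurableType d1) (Y : measurableType d2)
  {R : realType} (PXY : probability (X * Y)%type R)
  (PX : probability X R) (PY : probability Y R) : \bar R :=
  let f := Radon_Nikodym (charge_of_finite_measure PXY)
             (PX \x PY : probability (X * Y)%type R) in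
  lne (\int[PY]_y ess_sup PX (fun x => f (x, y))).

(* Let f = dP_XY / d(P_X x P_Y), g y = ess sup_x f (x, y) and let s be the
   essential supremum of y |-> P_X(E_y).  By Tonelli,
   P_XY(E) = int_E f <= int_Y int_(E_y) f^+ (x, y), and the inner integral is
   at most g^+(y) P_X(E_y) <= s g^+(y) for P_Y-almost every y, whence
   P_XY(E) <= s int g^+.  Since f >= 0 almost everywhere and almost every
   section of a null set of the product is null, g >= 0 P_Y-almost everywhere,
   so int g^+ = int g <= exp (log (int g)). *)

From Pilot Require Import Defs.
From HB Require Import structures.
From mathcomp Require Import all_boot all_order all_algebra.
From mathcomp Require Import all_classical all_reals all_analysis.
From mathcomp Require Import ess_sup_inf measurable_realfun.
Set Implicit Arguments. Unset Strict Implicit. Unset Printing Implicit Defensive.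
Import Order.TTheory GRing.Theory Num.Theory.
Import numFieldNormedType.Exports.
Local Open Scope classical_set_scope.
Local Open Scope ring_scope.
Local Open Scope ereal_scope.

(* The right-hand integrands below need not be measurable, as
   y |-> ess sup_x f (x, y) is not known to be. *)
Section integral_without_measurability.
Context d (T : measurableType d) (R : realType).
Variable mu : {measure set T -> \bar R}.
Implicit Types f g h : T -> \bar R.

Lemma ge0_le_integral_pointwise f g : (forall x, 0 <= f x) ->
  (forall x, f x <= g x) -> \int[mu]_x f x <= \int[mu]_x g x.
Proof.
move=> f0 fg; have g0 x : 0 <= g x by apply: le_trans (fg x).
rewrite !ge0_integralTE//; apply: ereal_sup_le => _ [s /= sf <-].
by exists s => //= x; exact: le_trans (sf x) (fg x).
Qed.

Lemma ge0_ae_eq0_integral h : (forall x, 0 <= h x) ->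
  {ae mu, forall x, h x = 0} -> \int[mu]_x h x = 0.
Proof.
move=> h0 [N [mN N0 hN]]; apply/eqP; rewrite eq_le integral_ge0 ?andbT//.
(* [h] is dominated by [+oo] on the null set [N] and by [0] elsewhere *)
apply: le_trans (@ge0_le_integral_pointwise h ((cst +oo) \_ N) h0 _) _.
  move=> x; rewrite patchE; case: ifPn => [_|]; first exact: leey.
  by rewrite notin_setE => xN; rewrite (contrapT (fun hx => xN (hN x hx))).
by rewrite -integral_mkcond integral_cst// N0 mule0.
Qed.

Lemma ae_ge0_integralE h : {ae mu, forall x, 0 <= h x} ->
  \int[mu]_x h x = \int[mu]_x h^\+ x.
Proof.
move=> h0; rewrite integralE (@ge0_ae_eq0_integral h^\-) ?sube0//.
apply: filterS h0 => x hx0.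
by rewrite funenegE; apply/max_idPr; rewrite leeNl oppe0.
Qed.

Lemma ae_ge0_le_integral_pointwise f g : measurable_fun setT f ->
    (forall x, 0 <= f x) -> (forall x, 0 <= g x) ->
  {ae mu, forall x, f x <= g x} -> \int[mu]_x f x <= \int[mu]_x g x.
Proof.
move=> mf f0 g0 [N [mN N0 fgN]].
rewrite (ge0_negligible_integral _ _ _ _ N0)// integral_mkcond.
apply: ge0_le_integral_pointwise => [x|x]; rewrite patchE; case: ifPn => //.
by rewrite inE => -[_ /(contra_not (fgN x))/contrapT].
Qed.

Lemma ae_ge0_le_integralZl f g (k : R) : measurable_fun setT f ->
    (forall x, 0 <= f x) -> (forall x, 0 <= g x) -> (0 <= k)%R ->
  {ae mu, forall x, f x <= k%:E * g x} ->
  \int[mu]_x f x <= k%:E * \int[mu]_x g x.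
Proof.
move=> mf f0 g0 k0; have [-> fkg|kN0 fkg] := eqVneq k 0%R.
  rewrite mul0e -(integral0 mu setT).
  apply: ae_ge0_le_integral_pointwise => //.
  by apply: filterS fkg => x; rewrite mul0e.
(* [g] cannot be scaled under the integral, so [k^-1] is moved onto [f] *)
have kV0 : (0 <= k^-1)%R by rewrite invr_ge0.
have -> : \int[mu]_x f x = k%:E * \int[mu]_x (k^-1%:E * f x).
  rewrite -ge0_integralZl_EFin//.
  - by under [RHS]eq_integral do rewrite muleA -EFinM divff// mul1e.
  - by move=> x _; rewrite mule_ge0 ?lee_fin.
  - exact: measurable_funeM.
rewrite lee_wpmul2l ?lee_fin//; apply: ae_ge0_le_integral_pointwise => //.
- exact: measurable_funeM.
- by move=> x; rewrite mule_ge0 ?lee_fin.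
apply: filterS fkg => x fx; apply: le_trans (lee_wpmul2l _ fx) _.
  by rewrite lee_fin.
by rewrite muleA -EFinM mulVf// mul1e.
Qed.

End integral_without_measurability.

Lemma integral_le_funepos d (T : measurableType d) (R : realType)
    (mu : {measure set T -> \bar R}) (D : set T) (f : T -> \bar R) :
  \int[mu]_(x in D) f x <= \int[mu]_(x in D) f^\+ x.
Proof.
rewrite [leLHS]integralE -[leRHS]sube0; apply: leeB => //.
by apply: integral_ge0 => x _; exact: funeneg_ge0.
Qed.

Lemma Radon_Nikodym_ae_ge0 d (T : measurableType d) (R : realType)
    (nu : {finite_measure set T -> \bar R})
    (mu : {sigma_finite_measure set T -> \bar R}) : nu `<< mu ->
  {ae mu, forall x, 0 <= Radon_Nikodym (charge_of_finite_measure nu) mu x}.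
Proof.
move=> numu.
apply: filterS (ae_eq_Radon_Nikodym_SigmaFinite numu measurableT) => x.
by move=> /(_ I) <-; exact: Radon_Nikodym_SigmaFinite.f_ge0.
Qed.

Lemma probability_setT_gt0 d (T : measurableType d) (R : realType)
  (P : probability T R) : 0 < P [set: T].
Proof. by rewrite probability_setT. Qed.

Lemma le_expeR_lne (R : realType) (x : \bar R) :
  0 <= x -> x <= expeR (Defs.lne x).
Proof.
case: x => [r| |]//=; rewrite !lee_fin => r0.
have [->|rN0] := eqVneq r 0%R; first exact: expR_ge0.
by rewrite lnK// posrE lt0r rN0.
Qed.

Lemma expeR_lne_gt0 (R : realType) (x : \bar R) :
  -oo < x -> 0 < expeR (Defs.lne x).
Proof. by case: x => [r| |]//= _; rewrite lte_fin expR_gt0. Qed.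

Definition ess_sup_ysection {d1 d2} {T1 : measurableType d1}
    {T2 : measurableType d2} {R : realType} (m1 : {measure set T1 -> \bar R})
    (f : T1 * T2 -> \bar R) (y : T2) : \bar R :=
  ess_sup m1 (fun x => f (x, y)).

Section ysections.
Context d1 d2 (T1 : measurableType d1) (T2 : measurableType d2) (R : realType).
Implicit Types (f F : T1 * T2 -> \bar R) (A : set (T1 * T2)).

Lemma fubini_G_patch (m1 : {measure set T1 -> \bar R}) F A y :
  fubini_G m1 (F \_ A) y = \int[m1]_(x in ysection A y) F (x, y).
Proof.
rewrite [RHS]integral_mkcond; apply: eq_integral => x _.
by rewrite !patchE mem_ysection.
Qed.

Lemma integral_ysection_le_ess_sup (m1 : {measure set T1 -> \bar R}) f A y :
    measurable A -> measurable_fun setT f ->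
  \int[m1]_(x in ysection A y) f^\+ (x, y) <=
    (ess_sup_ysection m1 f)^\+ y * m1 (ysection A y).
Proof.
move=> mA mf; have mAy := measurable_ysection y mA.
rewrite -(integral_cst m1 mAy).
have mfy : measurable_fun (ysection A y) (fun x => f^\+ (x, y)).
  exact/measurable_funTS/measurable_fun_pair1/measurable_funepos.
apply: (ae_ge0_le_integral mAy (fun x _ => funepos_ge0 f (x, y)) mfy
  (fun _ _ => funepos_ge0 _ y) (measurable_cst _)).
apply: filterS (@ess_sup_ge _ _ _ m1 (fun x => f (x, y))) => x fxy _.
by rewrite !funeposE; exact: le_max2.
Qed.

Variables (m1 : {sigma_finite_measure set T1 -> \bar R})
          (m2 : {sigma_finite_measure set T2 -> \bar R}).

Lemma ae_ysection_null N : measurable N -> (m1 \x m2) N = 0 ->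
  {ae m2, forall y, m1 (ysection N y) = 0}.
Proof.
move=> mN N0.
have : \int[m2]_y `|m1 (ysection N y)| = 0.
  rewrite -N0 (product_measure_unique (m' := m1 \x^ m2) _ mN); last first.
    by move=> A B mA mB /=; rewrite product_measure2E.
  by apply: eq_integral => y _; rewrite gee0_abs.
move/(ae_eq_integral_abs m2 measurableT (measurable_fun_ysection m1 mN)).
by apply: filterS => y /(_ I).
Qed.

Lemma ae_ess_sup_ysection_ge0 f : 0 < m1 [set: T1] ->
  {ae m1 \x m2, forall z, 0 <= f z} ->
  {ae m2, forall y, 0 <= ess_sup_ysection m1 f y}.
Proof.
move=> m1T [N [mN N0 fN]].
apply: filterS (@ae_ysection_null N mN N0) => y Ny0; apply: ess_sup_gee => //.
exists (ysection N y); split => //; first exact: measurable_ysection.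
by move=> x fxy; rewrite /ysection /= inE; exact: fN.
Qed.

Lemma integral_funepos_le_ess_sup f A (r : R) :
    measurable A -> measurable_fun setT f -> (0 <= r)%R ->
  {ae m2, forall y, m1 (ysection A y) <= r%:E} ->
  \int[m1 \x m2]_(z in A) f^\+ z <=
    r%:E * \int[m2]_y (ess_sup_ysection m1 f)^\+ y.
Proof.
move=> mA mf r0 Ar.
have mfA : measurable_fun setT (f^\+ \_ A).
  apply: (measurable_restrictT _ mA).1.
  exact/measurable_funTS/measurable_funepos.
have fA0 z : 0 <= (f^\+ \_ A) z.
  by rewrite patchE; case: ifP => // _; exact: funepos_ge0.
rewrite integral_mkcond fubini_tonelli2//.
apply: ae_ge0_le_integralZl => //.
- exact: measurable_fun_fubini_tonelli_G.
- by move=> y; apply: integral_ge0.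
- apply: filterS Ar => y Ayr; rewrite fubini_G_patch.
  apply: le_trans (@integral_ysection_le_ess_sup m1 f A y mA mf) _.
  by rewrite [leRHS]muleC lee_wpmul2l// funepos_ge0.
Qed.

End ysections.

Theorem corollary3 (d1 d2 : measure_display)
  (X : measurableType d1) (Y : measurableType d2) (R : realType)
  (PXY : probability (X * Y)%type R)
  (PX : probability X R) (PY : probability Y R)
  (hPX : forall A : set X, measurable A -> PX A = PXY (A `*` [set: Y]))
  (hPY : forall B : set Y, measurable B -> PY B = PXY ([set: X] `*` B))
  (hac : PXY `<< (PX \x PY))
  (E : set (X * Y)%type) (mE : measurable E) :
  PXY E <= ess_sup PY (fun y => PX (ysection E y))
           * expeR (max_leakage PXY PX PY).
Proof.
set P := (PX \x PY : probability (X * Y)%type R).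
set f := Radon_Nikodym (charge_of_finite_measure PXY) P.
have mf : measurable_fun setT f.
  exact/measurable_int/Radon_Nikodym_integrable.
set I := \int[PY]_y (ess_sup_ysection PX f)^\+ y.
have I0 : 0 <= I by apply: integral_ge0 => y _; exact: funepos_ge0.
have -> : max_leakage PXY PX PY = Defs.lne I.
  congr Defs.lne; apply: ae_ge0_integralE.
  apply: ae_ess_sup_ysection_ge0; first exact: probability_setT_gt0.
  exact: (@Radon_Nikodym_ae_ge0 _ _ _ PXY P hac).
have PXYE : PXY E <= \int[P]_(z in E) f^\+ z.
  have hac' : charge_of_finite_measure PXY `<< P by exact: hac.
  have -> : PXY E = \int[P]_(z in E) f z := Radon_Nikodym_integral hac' mE.
  exact: integral_le_funepos.
have := ess_sup_ge PY (fun y => PX (ysection E y)).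
have : 0 <= ess_sup PY (fun y => PX (ysection E y)).
  by apply: ess_sup_gee; [exact: probability_setT_gt0|exact: aeW].
case: (ess_sup PY _) => [r r0 Er|_ _|//].
- apply: le_trans PXYE _; rewrite lee_fin in r0.
  apply: le_trans (integral_funepos_le_ess_sup mE mf r0 Er) _.
  by rewrite lee_wpmul2l ?lee_fin// le_expeR_lne.
- by rewrite gt0_mulye ?leey// expeR_lne_gt0// (lt_le_trans ltNy0 I0).
Qed.
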